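(* Let $U,V$ be $\mathrm{OST}$-monoids and $\alpha:U\to V$ a surjective monotone transmission, and let $\alpha=\rho\circ\mu\circ\beta\circ\lambda$ with $\lambda:U\to\bar U$, $\beta:\bar U\to W$, $\mu:W\to\bar W$, $\rho:\bar W\to V$ be a canonical factorization of $\alpha$. Then the supertropical monoids $\bar U,W,\bar W$ can be equipped with total orderings, in a unique way, such that they become $\mathrm{OST}$-monoids and all factors $\lambda,\beta,\mu,\rho$ are monotone transmissions.
   Context: A supertropical monoid is a commutative monoid $(U,\cdot)$ with absorbing element $0$ and distinguished idempotent $e$ with $ex=0\Rightarrow x=0$, together with a total ordering $\le_M$ on $M:=eU$, compatible with multiplication and with $0$ least, making $M$ a bipotent semiring (addition $=\max$). A transmission $\alpha:U\to V$ is a map with $\alpha(0)=0$, $\alpha(1)=1$, multiplicative, $\alpha(e_U)=e_V$, order-preserving on $eU$; ghost part $\gamma:=\alpha^\nu$ its restriction $eU\to eV$; ghost kernel $\mathfrak A_\alpha:=\{x:\alpha(x)\in eV\}$. An OST-monoid is a supertropical monoid with a total ordering $\le$ on $U$ such that $x\le y\Rightarrow xz\le yz$, $\le$ restricts to $\le_M$ on $M$, and $0\le1\le e$. A transmission between OST-monoids is monotone if $x\le y\Rightarrow\alpha(x)\le\alpha(y)$. Canonical factorization of a surjective transmission $\alpha$ with $N:=eV$: a factorization $\alpha=\rho\circ\mu\circ\beta\circ\lambda$ in which, up to isomorphisms over the ghost ideals, $\lambda=\pi_{E(U,\mathfrak A_\alpha)}:U\to\bar U=U/E(U,\mathfrak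 A_\alpha)$, $\beta=\pi_{F(\bar U,\gamma)}:\bar U\to W=\bar U/F(\bar U,\gamma)$, $\mu=\pi_T:W\to\bar W=W/T$ for a tangible MFCE-relation $T$ on $W$, and $\rho:\bar W\to V$ is an isomorphism of supertropical monoids whose ghost part is $\mathrm{id}_N$. Here quotients by TE-relations carry the unique supertropical monoid structure making the projection a transmission; $E(U,\mathfrak A)$ ($\mathfrak A\supseteq M$ an ideal): $x\sim y$ iff $x=y$ or ($x,y\in\mathfrak A$, $ex=ey$); $F(\bar U,\gamma)$: $x\sim y$ iff $x=y$, or $x,y\in M$ with $\gamma(x)=\gamma(y)$, or $\gamma(ex)=\gamma(ey)=0$ (ghost ideal of quotient identified with $N$); an MFCE-relation is a multiplicative equivalence relation with $x\sim y\Rightarrow ex=ey$, tangible if ghosts are equivalent only to themselves. *)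

Set Implicit Arguments.

(** A supertropical monoid: a commutative monoid with absorbing 0, a
    distinguished idempotent [e] with [e x = 0 -> x = 0], and a total
    ordering [leM] on the ghost ideal [M = eU], compatible with
    multiplication and with 0 least.  [leM] is only meaningful on ghosts. *)
Record stmonoid := STMonoid {
  car :> Type;
  mul : car -> car -> car;
  one : car;
  zero : car;
  ee : car;
  leM : car -> car -> Prop;
  mulA : forall x y z, mul x (mul y z) = mul (mul x y) z;
  mulC : forall x y, mul x y = mul y x;
  mul1 : forall x, mul one x = x;
  mul0 : forall x, mul zero x = zero;
  ee_idem : mul ee ee = ee;
  ee_zero : forall x, mul ee x = zero -> x = zero;
  leM_refl : forall x, (exists a, x = mul ee a) -> leM x x;
  leM_antisym : forall x y, (exists a, x = mul ee a) -> (exists b, y = mul ee b) ->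
      leM x y -> leM y x -> x = y;
  leM_trans : forall x y z, (exists a, x = mul ee a) -> (exists b, y = mul ee b) ->
      (exists c, z = mul ee c) -> leM x y -> leM y z -> leM x z;
  leM_total : forall x y, (exists a, x = mul ee a) -> (exists b, y = mul ee b) ->
      leM x y \/ leM y x;
  leM_mul : forall x y z, (exists a, x = mul ee a) -> (exists b, y = mul ee b) ->
      (exists c, z = mul ee c) -> leM x y -> leM (mul x z) (mul y z);
  leM_zero : forall x, (exists a, x = mul ee a) -> leM zero x
}.

Arguments mul {s}.
Arguments one {s}.
Arguments zero {s}.
Arguments ee {s}.
Arguments leM {s}.

Definition ghost {U : stmonoid} (x : U) : Prop := exists a : U, x = mul ee a.

Definition transmission {U V : stmonoid} (f : U -> V) : Prop :=
  f zero = zero /\ f one = one /\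
  (forall x y, f (mul x y) = mul (f x) (f y)) /\
  f ee = ee /\
  (forall x y : U, ghost x -> ghost y -> leM x y -> leM (f x) (f y)).

Definition st_iso {U V : stmonoid} (f : U -> V) : Prop :=
  transmission f /\ exists g : V -> U, transmission g /\
    (forall x, g (f x) = x) /\ (forall y, f (g y) = y).

Definition surjective {A B : Type} (f : A -> B) : Prop := forall y, exists x, f x = y.

Definition OST {U : stmonoid} (le : U -> U -> Prop) : Prop :=
  (forall x, le x x) /\
  (forall x y, le x y -> le y x -> x = y) /\
  (forall x y z, le x y -> le y z -> le x z) /\
  (forall x y, le x y \/ le y x) /\
  (forall x y z, le x y -> le (mul x z) (mul y z)) /\
  (forall x y : U, ghost x -> ghost y -> (le x y <-> leM x y)) /\
  le zero one /\ le one ee.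

Definition monotone {U V : stmonoid} (leU : U -> U -> Prop) (leV : V -> V -> Prop)
  (f : U -> V) : Prop := forall x y, leU x y -> leV (f x) (f y).

Definition ghost_kernel {U V : stmonoid} (f : U -> V) (x : U) : Prop := ghost (f x).

Definition Erel {U : stmonoid} (A : U -> Prop) (x y : U) : Prop :=
  x = y \/ (A x /\ A y /\ mul ee x = mul ee y).

(** The relation [F(Ubar, gamma)] on [Ubar = U / E(U, A_alpha)], where the
    ghost ideal of [Ubar] is identified with [M = eU] via [lam] (so the
    ghost part [gamma : M -> N] of [alpha] is read on [eUbar] as
    [gamma (lam m) = alpha m] for [m] in [M]). *)
Definition Frel {U Ub V : stmonoid} (lam : U -> Ub) (alpha : U -> V) (x y : Ub) : Prop :=
  x = y
  \/ (ghost x /\ ghost y /\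
      exists m m' : U, ghost m /\ ghost m' /\ lam m = x /\ lam m' = y /\ alpha m = alpha m')
  \/ ((exists m : U, ghost m /\ lam m = mul ee x /\ alpha m = zero) /\
      (exists m : U, ghost m /\ lam m = mul ee y /\ alpha m = zero)).

Definition MFCE {W : stmonoid} (R : W -> W -> Prop) : Prop :=
  (forall x, R x x) /\ (forall x y, R x y -> R y x) /\
  (forall x y z, R x y -> R y z -> R x z) /\
  (forall x y z, R x y -> R (mul x z) (mul y z)) /\
  (forall x y, R x y -> mul ee x = mul ee y).

Definition tangible_rel {W : stmonoid} (R : W -> W -> Prop) : Prop :=
  forall x y : W, ghost x -> R x y -> y = x.

(** Canonical factorization [alpha = rho o mu o beta o lam]: each of
    [lam, beta, mu] is (up to isomorphism over the ghost ideals) the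
    projection onto the quotient by the indicated relation, i.e. a
    surjective transmission whose fibre relation is exactly that relation;
    [rho] is an isomorphism (its ghost part is then [id_N] by the
    factorization identity). *)
Definition canonical_factorization {U Ub W Wb V : stmonoid} (alpha : U -> V)
  (lam : U -> Ub) (beta : Ub -> W) (mu : W -> Wb) (rho : Wb -> V) : Prop :=
  (forall x, alpha x = rho (mu (beta (lam x)))) /\
  (transmission lam /\ surjective lam /\
     forall x y, lam x = lam y <-> Erel (ghost_kernel alpha) x y) /\
  (transmission beta /\ surjective beta /\
     forall x y, beta x = beta y <-> Frel lam alpha x y) /\
  (transmission mu /\ surjective mu /\
     MFCE (fun x y => mu x = mu y) /\ tangible_rel (fun x y => mu x = mu y)) /\
  st_iso rho /\
  (forall m : U, ghost m -> rho (mu (beta (lam m))) = alpha m).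

(* Each of [lam], [beta o lam], [mu o beta o lam] is a surjective transmission
   out of the totally ordered [U] whose fibres are intervals.  For [lam] and
   [beta o lam] the fibres are cut out by equalities of the monotone maps
   [alpha] and [x |-> alpha (e x)] (e.g. [beta (lam x) = beta (lam y)] iff
   [x = y], or [alpha x = alpha y] is ghost, or [alpha (e x) = alpha (e y) = 0]);
   [mu o beta o lam] has the fibres of [alpha] since [rho] is injective.
   A surjective transmission with convex fibres pushes the ordering of [U]
   forward to an OST-ordering of its target, and the maps of the factorization
   are monotone between these image orderings.  Uniqueness holds because a
   total ordering on the source of a surjection determines every ordering of
   the target for which the surjection is monotone. *)
Set Implicit Arguments.
From Stdlib Require Import Classical.

Definition image_le {X Y : Type} (leX : X -> X -> Prop) (f : X -> Y) (y1 y2 : Y) : Prop :=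
  y1 = y2 \/ forall a b, f a = y1 -> f b = y2 -> leX a b.

Definition fibre_convex {X Y : Type} (leX : X -> X -> Prop) (f : X -> Y) : Prop :=
  forall a b c, leX a b -> leX b c -> f a = f c -> f b = f a.

Section OSTProjections.
Variables (U : stmonoid) (le : U -> U -> Prop).
Hypothesis HU : OST le.

Local Ltac OST_field := destruct HU as (? & ? & ? & ? & ? & ? & ? & ?); eauto.

Lemma OST_refl x : le x x.
Proof. OST_field. Qed.

Lemma OST_antisym [x y] : le x y -> le y x -> x = y.
Proof. OST_field. Qed.

Lemma OST_trans [x y z] : le x y -> le y z -> le x z.
Proof. OST_field. Qed.

Lemma OST_total x y : le x y \/ le y x.
Proof. OST_field. Qed.

Lemma OST_mulr [x y] z : le x y -> le (mul x z) (mul y z).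
Proof. OST_field. Qed.

Lemma OST_ghost [x y] : ghost x -> ghost y -> (le x y <-> leM x y).
Proof. OST_field. Qed.

Lemma OST_mul_ee : monotone le le (mul ee).
Proof. intros x y Hxy. rewrite !(mulC _ ee). exact (OST_mulr ee Hxy). Qed.

End OSTProjections.

Lemma ghost_mul_ee (U : stmonoid) (x : U) : ghost (mul ee x).
Proof. exists x; reflexivity. Qed.

Lemma mul_ee_ghost (U : stmonoid) (x : U) : ghost x -> mul ee x = x.
Proof. intros [a ->]. rewrite mulA, ee_idem. reflexivity. Qed.

Section TransmissionFacts.
Variables (U V : stmonoid) (f : U -> V).
Hypothesis Hf : transmission f.

Lemma transmission_mul x y : f (mul x y) = mul (f x) (f y).
Proof. apply (proj1 (proj2 (proj2 Hf))). Qed.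

Lemma transmission_mul_ee x : f (mul ee x) = mul ee (f x).
Proof. rewrite transmission_mul. f_equal. apply (proj1 (proj2 (proj2 (proj2 Hf)))). Qed.

Lemma transmission_ghost x : ghost x -> ghost (f x).
Proof. intros [a ->]. rewrite transmission_mul_ee. apply ghost_mul_ee. Qed.

Lemma transmission_ghost_preimage :
  surjective f -> forall y, ghost y -> exists x, ghost x /\ f x = y.
Proof.
  intros Hs y [b ->]. destruct (Hs b) as [a <-].
  exists (mul ee a). split; [apply ghost_mul_ee | apply transmission_mul_ee].
Qed.

End TransmissionFacts.

Lemma transmission_comp (U V W : stmonoid) (f : U -> V) (g : V -> W) :
  transmission f -> transmission g -> transmission (fun x => g (f x)).
Proof.
  intros Hf Hg. pose proof (transmission_ghost Hf) as f_ghost.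
  destruct Hf as [f0 [f1 [fm [fe fl]]]], Hg as [g0 [g1 [gm [ge gl]]]].
  repeat split.
  - rewrite f0; exact g0.
  - rewrite f1; exact g1.
  - intros x y; rewrite fm, gm; reflexivity.
  - rewrite fe; exact ge.
  - intros x y Gx Gy Hxy.
    apply gl; auto.
Qed.

Lemma surjective_comp (X Y Z : Type) (f : X -> Y) (g : Y -> Z) :
  surjective f -> surjective g -> surjective (fun x => g (f x)).
Proof.
  intros Hf Hg z. destruct (Hg z) as [y <-]. destruct (Hf y) as [x <-].
  exists x; reflexivity.
Qed.

Lemma monotone_fibre_convex (X Y : stmonoid) (leX : X -> X -> Prop) (leY : Y -> Y -> Prop)
  (f : X -> Y) :
  (forall y y', leY y y' -> leY y' y -> y = y') -> monotone leX leY f -> fibre_convex leX f.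
Proof.
  intros antisym Hf a b c Hab Hbc Hac. apply antisym.
  - rewrite Hac. apply Hf; exact Hbc.
  - apply Hf; exact Hab.
Qed.

Lemma fibre_convex_of_injective_comp (X Y Z : Type) (leX : X -> X -> Prop) (f : X -> Z)
  (g : X -> Y) (h : Y -> Z) :
  (forall x, f x = h (g x)) -> (forall y y', h y = h y' -> y = y') ->
  fibre_convex leX f -> fibre_convex leX g.
Proof.
  intros Hf h_inj Hc a b c Hab Hbc Hac. apply h_inj. rewrite <- !Hf.
  apply (Hc a b c Hab Hbc). rewrite !Hf, Hac. reflexivity.
Qed.

Section ImageOrder.
Variables (X Y : stmonoid) (leX : X -> X -> Prop) (f : X -> Y).
Hypotheses (HX : OST leX) (f_surj : surjective f) (f_convex : fibre_convex leX f).

Lemma fibre_convex_le_fibres a b a' b' :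
  f a <> f b -> leX a b -> f a' = f a -> f b' = f b -> leX a' b'.
Proof.
  intros Hne Hab Ha Hb.
  destruct (OST_total HX a' b') as [H | Hb'a']; [exact H | exfalso; apply Hne].
  destruct (OST_total HX a' b) as [Ha'b | Hba'].
  - rewrite <- Ha, <- Hb. apply (f_convex Hb'a' Ha'b). congruence.
  - symmetry. apply (f_convex Hab Hba'). congruence.
Qed.

Lemma image_le_monotone : monotone leX (image_le leX f) f.
Proof.
  intros a b Hab. destruct (classic (f a = f b)) as [E | Hne]; [left; exact E | right].
  intros a' b' Ha Hb. exact (fibre_convex_le_fibres Hne Hab Ha Hb).
Qed.

Lemma image_le_total y1 y2 : image_le leX f y1 y2 \/ image_le leX f y2 y1.
Proof.
  destruct (f_surj y1) as [a <-], (f_surj y2) as [b <-].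
  destruct (OST_total HX a b); [left | right]; apply image_le_monotone; assumption.
Qed.

Lemma image_le_antisym y1 y2 : image_le leX f y1 y2 -> image_le leX f y2 y1 -> y1 = y2.
Proof.
  intros [E | H] [E' | H']; auto.
  destruct (f_surj y1) as [a <-], (f_surj y2) as [b <-].
  f_equal. apply (OST_antisym HX); [apply H | apply H']; reflexivity.
Qed.

Lemma image_le_trans y1 y2 y3 :
  image_le leX f y1 y2 -> image_le leX f y2 y3 -> image_le leX f y1 y3.
Proof.
  intros [<- | H] [<- | H']; try (right; assumption); [left; reflexivity |].
  right. intros a c Ha Hc. destruct (f_surj y2) as [b Hb].
  apply (OST_trans HX (y := b)); [apply H | apply H']; assumption.
Qed.

Hypothesis f_trans : transmission f.

Lemma image_le_mulr y1 y2 y3 :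
  image_le leX f y1 y2 -> image_le leX f (mul y1 y3) (mul y2 y3).
Proof.
  intros [<- | H]; [left; reflexivity |].
  destruct (f_surj y1) as [a <-], (f_surj y2) as [b <-], (f_surj y3) as [c <-].
  rewrite <- !(transmission_mul f_trans). apply image_le_monotone.
  apply (OST_mulr HX). apply H; reflexivity.
Qed.

Lemma image_le_leM y1 y2 : ghost y1 -> ghost y2 -> image_le leX f y1 y2 -> leM y1 y2.
Proof.
  intros G1 G2 [<- | H]; [apply leM_refl; exact G1 |].
  destruct (transmission_ghost_preimage f_trans f_surj G1) as [a [Ga <-]].
  destruct (transmission_ghost_preimage f_trans f_surj G2) as [b [Gb <-]].
  apply f_trans; auto. apply (OST_ghost HX Ga Gb). apply H; reflexivity.
Qed.

Lemma image_le_ghost y1 y2 : ghost y1 -> ghost y2 -> (image_le leX f y1 y2 <-> leM y1 y2).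
Proof.
  intros G1 G2. split; [apply image_le_leM; assumption |].
  intros H12. destruct (image_le_total y1 y2) as [H | H]; [exact H |].
  left. apply leM_antisym; auto. apply image_le_leM; auto.
Qed.

Lemma image_le_OST : OST (image_le leX f).
Proof.
  destruct f_trans as [f0 [f1 [_ [fe _]]]].
  split; [intros y; left; reflexivity |].
  split; [exact image_le_antisym |].
  split; [exact image_le_trans |].
  split; [exact image_le_total |].
  split; [exact image_le_mulr |].
  split; [exact image_le_ghost |].
  split; [rewrite <- f0, <- f1 | rewrite <- f1, <- fe]; apply image_le_monotone; apply HX.
Qed.

End ImageOrder.

Lemma image_le_factor_monotone {X Y Z : stmonoid} {leX : X -> X -> Prop} {leZ : Z -> Z -> Prop}
  {f : X -> Y} {g : X -> Z} {h : Y -> Z} :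
  surjective f -> (forall z, leZ z z) -> (forall x, h (f x) = g x) ->
  monotone leX leZ g -> monotone (image_le leX f) leZ h.
Proof.
  intros Hs refl Hh Hg y y' [<- | H]; [apply refl |].
  destruct (Hs y) as [a <-], (Hs y') as [b <-].
  rewrite !Hh. apply Hg, H; reflexivity.
Qed.

Lemma surjective_monotone_le_incl (X Y : stmonoid) (leX leX' : X -> X -> Prop)
  (le le' : Y -> Y -> Prop) (f : X -> Y) :
  surjective f -> OST leX -> (forall a b, leX a b -> leX' a b) -> OST le -> OST le' ->
  monotone leX le f -> monotone leX' le' f -> forall y y', le y y' -> le' y y'.
Proof.
  intros Hs HX Hincl H H' M M' y y' Hyy'.
  destruct (classic (y = y')) as [<- | Hne]; [apply (OST_refl H') |].
  destruct (Hs y) as [a <-], (Hs y') as [b <-].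
  destruct (OST_total HX a b) as [Hab | Hba]; [apply M', Hincl, Hab |].
  exfalso. apply Hne, (OST_antisym H); [exact Hyy' | apply M, Hba].
Qed.

Lemma surjective_monotone_le_iff (X Y : stmonoid) (leX leX' : X -> X -> Prop)
  (le le' : Y -> Y -> Prop) (f : X -> Y) :
  surjective f -> OST leX -> OST leX' -> (forall a b, leX a b <-> leX' a b) ->
  OST le -> OST le' -> monotone leX le f -> monotone leX' le' f ->
  forall y y', le y y' <-> le' y y'.
Proof.
  intros Hs HX HX' Hiff H H' M M' y y'. split.
  - apply (surjective_monotone_le_incl Hs HX (fun a b => proj1 (Hiff a b)) H H' M M').
  - apply (surjective_monotone_le_incl Hs HX' (fun a b => proj2 (Hiff a b)) H' H M' M).
Qed.

Section CanonicalFibres.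
Variables (U V Ub W : stmonoid) (leU : U -> U -> Prop) (leV : V -> V -> Prop).
Variables (alpha : U -> V) (lam : U -> Ub) (beta : Ub -> W).
Hypotheses (HU : OST leU) (HV : OST leV).
Hypotheses (alpha_trans : transmission alpha) (alpha_mono : monotone leU leV alpha).
Hypothesis lam_trans : transmission lam.
Hypothesis lam_fibres : forall x y, lam x = lam y <-> Erel (ghost_kernel alpha) x y.
Hypothesis beta_fibres : forall x y, beta x = beta y <-> Frel lam alpha x y.

Lemma alpha_fibre_convex : fibre_convex leU alpha.
Proof. exact (monotone_fibre_convex (OST_antisym HV) alpha_mono). Qed.

Lemma alpha_mul_ee_fibre_convex : fibre_convex leU (fun x => alpha (mul ee x)).
Proof.
  apply (monotone_fibre_convex (OST_antisym HV)).
  intros x y Hxy. apply alpha_mono, (OST_mul_ee HU), Hxy.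
Qed.

Lemma lam_eq_alpha_eq x y : lam x = lam y -> alpha x = alpha y.
Proof.
  intros Hxy. apply lam_fibres in Hxy as [<- | [Gx [Gy Exy]]]; [reflexivity |].
  unfold ghost_kernel in *.
  rewrite <- (mul_ee_ghost Gx), <- (mul_ee_ghost Gy), <- !(transmission_mul_ee alpha_trans).
  rewrite Exy. reflexivity.
Qed.

Lemma lam_mul_ee x : ghost (alpha x) -> lam (mul ee x) = lam x.
Proof.
  intros Gx. apply lam_fibres. right. unfold ghost_kernel.
  rewrite (transmission_mul_ee alpha_trans), (mul_ee_ghost Gx).
  split; [exact Gx | split; [exact Gx |]].
  rewrite mulA, ee_idem. reflexivity.
Qed.

Lemma lam_fibre_convex : fibre_convex leU lam.
Proof.
  intros a b c Hab Hbc Hac.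
  pose proof (lam_eq_alpha_eq Hac) as Aac.
  apply lam_fibres in Hac as [<- | [Ga [_ Eac]]].
  { f_equal. apply (OST_antisym HU); assumption. }
  assert (Eba : mul ee b = mul ee a).
  { apply (monotone_fibre_convex (OST_antisym HU) (OST_mul_ee HU) _ _ _ Hab Hbc Eac). }
  assert (Aba : alpha b = alpha a) by exact (alpha_fibre_convex Hab Hbc Aac).
  apply lam_fibres. right. unfold ghost_kernel in *. rewrite Aba. auto.
Qed.

Lemma beta_lam_fibres x y :
  beta (lam x) = beta (lam y) <->
  x = y \/ (ghost (alpha x) /\ alpha x = alpha y)
  \/ (alpha (mul ee x) = zero /\ alpha (mul ee y) = zero).
Proof.
  rewrite beta_fibres. unfold Frel.
  rewrite <- !(transmission_mul_ee lam_trans). split.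
  - intros [Hxy | [[_ [_ [m [m' [Gm [_ [Hm [Hm' Amm']]]]]]]] | [[m [_ [Hm Am]]] [m' [_ [Hm' Am']]]]]].
    + pose proof (lam_eq_alpha_eq Hxy) as Axy.
      apply lam_fibres in Hxy as [Exy | [Gx _]]; [left; exact Exy | right; left; auto].
    + right; left. rewrite <- (lam_eq_alpha_eq Hm), <- (lam_eq_alpha_eq Hm').
      split; [apply (transmission_ghost alpha_trans Gm) | exact Amm'].
    + right; right. rewrite <- (lam_eq_alpha_eq Hm), <- (lam_eq_alpha_eq Hm'). auto.
  - intros [<- | [[Gx Axy] | [Ax Ay]]]; [left; reflexivity | right; left | right; right].
    + assert (Gy : ghost (alpha y)) by (rewrite <- Axy; exact Gx).
      rewrite <- (lam_mul_ee Gx), <- (lam_mul_ee Gy).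
      repeat split; try apply (transmission_ghost lam_trans); try apply ghost_mul_ee.
      exists (mul ee x), (mul ee y). repeat split; try apply ghost_mul_ee.
      rewrite !(transmission_mul_ee alpha_trans), Axy. reflexivity.
    + split; [exists (mul ee x) | exists (mul ee y)]; repeat split; auto; apply ghost_mul_ee.
Qed.

Lemma beta_lam_fibre_convex : fibre_convex leU (fun x => beta (lam x)).
Proof.
  intros a b c Hab Hbc Hac. apply beta_lam_fibres.
  apply beta_lam_fibres in Hac as [<- | [[Ga Aac] | [Aa Ac]]].
  - left. exact (OST_antisym HU Hbc Hab).
  - right; left. rewrite (alpha_fibre_convex Hab Hbc Aac). split; [exact Ga | reflexivity].
  - right; right. rewrite (alpha_mul_ee_fibre_convex Hab Hbc (eq_trans Aa (eq_sym Ac))). auto.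
Qed.

End CanonicalFibres.

Theorem theorem61p14 (U V : stmonoid) (leU : U -> U -> Prop) (leV : V -> V -> Prop)
  (alpha : U -> V)
  (HU : OST leU) (HV : OST leV)
  (Halpha : transmission alpha) (Hsurj : surjective alpha)
  (Hmono : monotone leU leV alpha)
  (Ub W Wb : stmonoid) (lam : U -> Ub) (beta : Ub -> W) (mu : W -> Wb) (rho : Wb -> V)
  (Hfact : canonical_factorization alpha lam beta mu rho) :
  (exists (leUb : Ub -> Ub -> Prop) (leW : W -> W -> Prop) (leWb : Wb -> Wb -> Prop),
      OST leUb /\ OST leW /\ OST leWb /\
      monotone leU leUb lam /\ monotone leUb leW beta /\
      monotone leW leWb mu /\ monotone leWb leV rho) /\
  (forall (le1 le1' : Ub -> Ub -> Prop) (le2 le2' : W -> W -> Prop)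
          (le3 le3' : Wb -> Wb -> Prop),
      OST le1 /\ OST le2 /\ OST le3 /\
      monotone leU le1 lam /\ monotone le1 le2 beta /\
      monotone le2 le3 mu /\ monotone le3 leV rho ->
      OST le1' /\ OST le2' /\ OST le3' /\
      monotone leU le1' lam /\ monotone le1' le2' beta /\
      monotone le2' le3' mu /\ monotone le3' leV rho ->
      (forall x y, le1 x y <-> le1' x y) /\
      (forall x y, le2 x y <-> le2' x y) /\
      (forall x y, le3 x y <-> le3' x y)).
Proof.
  destruct Hfact as [Hcomp [[Tl [Sl El]] [[Tb [Sb Eb]] [[Tm [Sm _]] [[_ [g [_ [gr _]]]] _]]]]].
  split.
  - set (g2 := fun x => beta (lam x)); set (g3 := fun x => mu (g2 x)).
    assert (T2 : transmission g2) by exact (transmission_comp Tl Tb).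
    assert (T3 : transmission g3) by exact (transmission_comp T2 Tm).
    assert (S2 : surjective g2) by exact (surjective_comp Sl Sb).
    assert (S3 : surjective g3) by exact (surjective_comp S2 Sm).
    assert (C1 : fibre_convex leU lam) by exact (lam_fibre_convex _ _ HU HV Halpha Hmono El).
    assert (C2 : fibre_convex leU g2) by exact (beta_lam_fibre_convex _ _ HU HV Halpha Hmono Tl El Eb).
    assert (C3 : fibre_convex leU g3).
    { apply (fibre_convex_of_injective_comp g3 rho Hcomp); [| exact (alpha_fibre_convex HV Hmono)].
      intros y y' E. rewrite <- (gr y), <- (gr y'), E. reflexivity. }
    exists (image_le leU lam), (image_le leU g2), (image_le leU g3).
    pose proof (image_le_OST HU Sl C1 Tl) as O1.
    pose proof (image_le_OST HU S2 C2 T2) as O2.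
    pose proof (image_le_OST HU S3 C3 T3) as O3.
    split; [exact O1 | split; [exact O2 | split; [exact O3 | split]]].
    + exact (image_le_monotone _ HU C1).
    + split; [| split].
      * exact (image_le_factor_monotone Sl (OST_refl O2) (fun _ => eq_refl)
                 (image_le_monotone _ HU C2)).
      * exact (image_le_factor_monotone S2 (OST_refl O3) (fun _ => eq_refl)
                 (image_le_monotone _ HU C3)).
      * exact (image_le_factor_monotone S3 (OST_refl HV) (fun x => eq_sym (Hcomp x)) Hmono).
  - intros le1 le1' le2 le2' le3 le3' [O1 [O2 [O3 [M1 [M2 [M3 _]]]]]]
      [O1' [O2' [O3' [M1' [M2' [M3' _]]]]]].
    assert (E1 := surjective_monotone_le_iff Sl HU HU (fun a b => iff_refl _) O1 O1' M1 M1').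
    assert (E2 := surjective_monotone_le_iff Sb O1 O1' E1 O2 O2' M2 M2').
    assert (E3 := surjective_monotone_le_iff Sm O2 O2' E2 O3 O3' M3 M3').
    auto.
Qed.
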